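(* For every positive integer $n$, $$\operatorname{lcm}\left({n\brack 0}_q,{n\brack 1}_q,\ldots,{n\brack n}_q\right)=\frac{\operatorname{lcm}([1]_q,[2]_q,\ldots,[n+1]_q)}{[n+1]_q},$$ where both least common multiples are taken in $\mathbb{Z}[q]$. *)

From HB Require Import structures.
From mathcomp Require Import all_boot all_order all_algebra.
Set Implicit Arguments. Unset Strict Implicit. Unset Printing Implicit Defensive.
Import Order.TTheory GRing.Theory Num.Theory.
Local Open Scope ring_scope.

Definition qint (k : nat) : {poly int} := \sum_(i < k) 'X^i.

Fixpoint qbinom (n k : nat) {struct n} : {poly int} :=
  match n, k with
  | _, 0 => 1
  | 0, _.+1 => 0
  | n'.+1, k'.+1 => qbinom n' k' + 'X^(k'.+1) * qbinom n' k'.+1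
  end.

(* Divisibility in the ring Z[q] (genuine, not pseudo-division). *)
Definition dvdZq (p m : {poly int}) : Prop := exists r : {poly int}, m = r * p.

(* l is a least common multiple in Z[q] of the polynomials in s
   (determined up to a unit, i.e. up to sign). *)
Definition is_lcmZq (s : seq {poly int}) (l : {poly int}) : Prop :=
  (forall p, p \in s -> dvdZq p l) /\
  (forall m, (forall p, p \in s -> dvdZq p m) -> dvdZq l m).

From HB Require Import structures.
From mathcomp Require Import all_boot all_order all_algebra all_field zify.
Set Implicit Arguments. Unset Strict Implicit. Unset Printing Implicit Defensive.
Import GRing.Theory.
Local Open Scope ring_scope.

(* Everything factors over Z[q] into cyclotomic polynomials 'Phi_d, d >= 2:
   [k]_q is the product of the 'Phi_d with d | k, so the q-factorial [m]_q!
   is the product of the 'Phi_d ^+ (m %/ d), and from [n k]_q [k]_q! [n-k]_q!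
   = [n]_q! the exponent of 'Phi_d in [n k]_q is 1 if adding k and n - k in
   base d produces a carry in the last digit, and 0 otherwise.  Such a carry
   never happens when d | n+1, and happens for k = d-1 when d does not divide
   n+1.  Distinct cyclotomic polynomials are coprime (over the complex
   numbers their roots are primitive roots of different orders), so a product
   of distinct 'Phi_d divides m in Z[q] iff every factor does; divisibility
   is transferred back from C[q] to Z[q] because the product is monic.
   Hence lcm([1]_q,...,[n+1]_q) is the product of all 'Phi_d, 2 <= d <= n+1,
   the lcm of the [n k]_q is the product of those with d not dividing n+1,
   and the theorem follows since least common multiples are unique up to a
   unit. *)

Lemma qint0 : qint 0 = 0.
Proof. by rewrite /qint big_ord0. Qed.

Lemma qintS k : qint k.+1 = qint k + 'X^k.
Proof. by rewrite /qint big_ord_recr. Qed.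

Lemma qintD a b : qint (a + b) = qint a + 'X^a * qint b.
Proof.
elim: b => [|b IH]; first by rewrite addn0 qint0 mulr0 addr0.
by rewrite addnS !qintS IH mulrDr -exprD addrA.
Qed.

Lemma qint_geometric k : ('X - 1) * qint k = 'X^k - 1.
Proof.
elim: k => [|k IH]; first by rewrite qint0 mulr0 expr0 subrr.
by rewrite qintS mulrDr IH mulrBl mul1r -exprS addrC addrA subrK.
Qed.

(* The product of the 'Phi_d ^+ e d over 2 <= d < N; all polynomials below
   are of this form for a large enough bound N. *)
Definition cycprod (N : nat) (e : nat -> nat) : {poly int} :=
  \prod_(2 <= d < N) 'Phi_d ^+ e d.

Lemma cycprodD N e1 e2 :
  cycprod N e1 * cycprod N e2 = cycprod N (fun d => e1 d + e2 d)%N.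
Proof. by rewrite /cycprod -big_split; apply: eq_bigr => d _; rewrite exprD. Qed.

Lemma eq_cycprod N e1 e2 :
  (forall d, (2 <= d < N)%N -> e1 d = e2 d) -> cycprod N e1 = cycprod N e2.
Proof.
move=> e12; rewrite /cycprod big_nat_cond [RHS]big_nat_cond.
by apply: eq_bigr => d /andP[/e12 -> _].
Qed.

Lemma cycprod_monic N e : cycprod N e \is monic.
Proof. by apply: monic_prod => d _; apply/monic_exp/Cyclotomic_monic. Qed.

Lemma cycprod_neq0 N e : cycprod N e != 0.
Proof. exact/monic_neq0/cycprod_monic. Qed.

Lemma cycprod_bool N (b : nat -> bool) :
  cycprod N (fun d => b d) = \prod_(2 <= d < N | b d) 'Phi_d.
Proof. by rewrite big_mkcond; apply: eq_bigr => d _; case: (b d). Qed.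

(* The factor of q^k - 1 excluded from cycprod. *)
Lemma Cyclotomic1 : 'Phi_1 = 'X - 1.
Proof. by have := prod_Cyclotomic (ltn0Sn 0); rewrite big_seq1 expr1. Qed.

Lemma qint_cycprod N k : (0 < k < N)%N -> qint k = cycprod N (fun d => d %| k)%N.
Proof.
case/andP=> k_gt0 lt_kN; rewrite cycprod_bool.
apply: (@mulfI _ 'Phi_1); first by rewrite monic_neq0 ?Cyclotomic_monic.
have divisorsE : perm_eq (divisors k) [seq d <- index_iota 1 N | d %| k]%N.
  apply: uniq_perm; rewrite ?filter_uniq ?iota_uniq ?divisors_uniq // => d.
  rewrite mem_filter mem_index_iota -dvdn_divisors //.
  have [dvd_dk|//] := boolP (d %| k)%N.
  by rewrite /= (dvdn_gt0 k_gt0 dvd_dk) (leq_ltn_trans (dvdn_leq k_gt0 dvd_dk)).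
rewrite Cyclotomic1 qint_geometric -(prod_Cyclotomic k_gt0) (perm_big _ divisorsE).
rewrite big_filter [LHS]big_ltn_cond ?dvd1n -?Cyclotomic1 //.
exact: leq_ltn_trans k_gt0 lt_kN.
Qed.

Definition qfact (m : nat) : {poly int} := \prod_(i < m) qint i.+1.

Lemma qfact0 : qfact 0 = 1.
Proof. by rewrite /qfact big_ord0. Qed.

Lemma qfactS m : qfact m.+1 = qfact m * qint m.+1.
Proof. by rewrite /qfact big_ord_recr. Qed.

(* Legendre's formula for q-factorials: 'Phi_d occurs in [m]_q! with
   multiplicity m %/ d, the number of multiples of d up to m. *)
Lemma qfact_cycprod N m : (m < N)%N -> qfact m = cycprod N (fun d => m %/ d)%N.
Proof.
elim: m => [|m IH] lt_mN.
  by rewrite qfact0 /cycprod big1 // => d _; rewrite div0n expr0.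
rewrite qfactS IH ?(ltnW lt_mN) // (qint_cycprod (N := N)) ?lt_mN // cycprodD.
by apply: eq_cycprod => d /andP[d_ge2 _]; rewrite (divnS _ (ltnW d_ge2)) addnC.
Qed.

Lemma qbinom_gt n k : (n < k)%N -> qbinom n k = 0.
Proof.
elim: n k => [|n IH] [|k] //= lt_nk.
by rewrite !IH ?mulr0 ?addr0 // ltnW.
Qed.

(* The factorial formula [n k]_q [k]_q! [n-k]_q! = [n]_q!, by induction on n
   through the q-Pascal recursion and [n+1]_q = [k+1]_q + q^(k+1) [n-k]_q. *)
Lemma qbinom_qfact n k : (k <= n)%N ->
  qbinom n k * (qfact k * qfact (n - k)) = qfact n.
Proof.
elim: n k => [|n IH] [|k] //= le_kn.
- by rewrite subnn qfact0 !mul1r.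
- by rewrite qfact0 subn0 !mul1r.
have left_term : qbinom n k * (qfact k.+1 * qfact (n - k)) = qfact n * qint k.+1.
  by rewrite qfactS -(IH k) // -[RHS]mulrA [X in _ * X = _]mulrAC.
have right_term : 'X^(k.+1) * qbinom n k.+1 * (qfact k.+1 * qfact (n - k)) =
                  'X^(k.+1) * qint (n - k) * qfact n.
  have [lt_kn|lt_nk|->] := ltngtP k n.
  - rewrite -(subnSK lt_kn) [qfact (n - k.+1).+1]qfactS -(IH k.+1) //.
    by rewrite -!mulrA; congr (_ * _); rewrite [RHS]mulrC !mulrA.
  - by rewrite ltnS leqNgt lt_nk in le_kn.
  - by rewrite qbinom_gt // subnn qint0 !(mulr0, mul0r).
rewrite subSS mulrDl left_term right_term qfactS [_ * qfact n]mulrC -mulrDr.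
by rewrite -qintD addSn subnKC.
Qed.

(* carry n k d: adding the last base-d digits of k and n - k overflows. *)
Definition carry (n k d : nat) : bool := (d <= k %% d + (n - k) %% d)%N.

Lemma qbinom_cycprod n k : (k <= n)%N -> qbinom n k = cycprod n.+2 (carry n k).
Proof.
move=> le_kn; have := qbinom_qfact le_kn.
have le_n : forall m, (m <= n)%N -> (m < n.+2)%N by move=> m /leqW.
rewrite !(qfact_cycprod (N := n.+2)) ?le_n ?leq_subr // cycprodD => fact_eq.
apply: (@mulIf _ (cycprod n.+2 (fun d => k %/ d + (n - k) %/ d)%N)).
  exact: cycprod_neq0.
rewrite fact_eq cycprodD; apply: eq_cycprod => d /andP[d_ge2 _].
by rewrite -{1}(subnKC le_kn) (divnD _ _ (ltnW d_ge2)) addnC.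
Qed.

(* When d | n+1 the last base-d digits of k and n - k add up to d - 1, since
   their sum is congruent to -1 modulo d and lies in [0, 2d - 2]. *)
Lemma carry_dvd n k d :
  (0 < d)%N -> (d %| n.+1)%N -> (k <= n)%N -> ~~ carry n k d.
Proof.
move=> d_gt0 dvd_dn le_kn; rewrite /carry -ltnNge.
have : (d %| (k %% d + (n - k) %% d).+1)%N.
  have n1E : n.+1 = ((k %% d + (n - k) %% d).+1 + (k %/ d + (n - k) %/ d) * d)%N.
    by have := divn_eq k d; have := divn_eq (n - k) d; lia.
  by rewrite -(dvdn_addl _ (dvdn_mull (k %/ d + (n - k) %/ d) (dvdnn d))) -n1E.
case/dvdnP=> [[|[|t]]] digit_sum;
  by have := ltn_pmod k d_gt0; have := ltn_pmod (n - k) d_gt0; lia.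
Qed.

(* When d <= n+1 does not divide n+1, splitting n = (d - 1) + (n - d + 1)
   produces a carry, as n - d + 1 is not a multiple of d. *)
Lemma carry_ndvd n d : (0 < d <= n.+1)%N -> ~~ (d %| n.+1)%N -> carry n d.-1 d.
Proof.
case/andP=> d_gt0 le_dn ndvd_dn; rewrite /carry modn_small ?prednK //.
rewrite -[X in (X <= _)%N](prednK d_gt0) -addn1 leq_add2l lt0n.
apply: contra ndvd_dn => rem_eq0.
have -> : n.+1 = (n - d.-1 + d)%N by lia.
by rewrite dvdn_addr.
Qed.

Lemma dvdZq_trans a b c : dvdZq a b -> dvdZq b c -> dvdZq a c.
Proof. by move=> [r ->] [s ->]; exists (s * r); rewrite mulrA. Qed.

Lemma dvdZq_mull a b c : dvdZq a b -> dvdZq a (c * b).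
Proof. by move=> [r ->]; exists (c * r); rewrite mulrA. Qed.

Lemma cycprod_dvd N e1 e2 :
  (forall d, (2 <= d < N)%N -> e1 d <= e2 d)%N ->
  dvdZq (cycprod N e1) (cycprod N e2).
Proof.
move=> le_e12; exists (cycprod N (fun d => e2 d - e1 d)%N); rewrite cycprodD.
by apply: eq_cycprod => d /le_e12 /subnK.
Qed.

Lemma Cyclotomic_dvd_cycprod N e d :
  (2 <= d < N)%N -> (0 < e d)%N -> dvdZq 'Phi_d (cycprod N e).
Proof.
move=> dN e_gt0; rewrite /cycprod (bigD1_seq d) ?mem_index_iota ?iota_uniq //=.
rewrite mulrC; apply: dvdZq_mull; rewrite -(prednK e_gt0) exprS.
by exists ('Phi_d ^+ (e d).-1); rewrite mulrC.
Qed.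

Local Notation toC := (map_poly (intr : int -> algC)).

Lemma prim_root_order_uniq (R : idomainType) (z : R) d e :
  d.-primitive_root z -> e.-primitive_root z -> d = e.
Proof.
move=> prim_d prim_e; apply/eqP; rewrite eqn_dvd.
rewrite (prim_order_dvd prim_d) (prim_order_dvd prim_e).
by rewrite (prim_expr_order prim_d) (prim_expr_order prim_e) eqxx.
Qed.

(* Distinct cyclotomic polynomials are coprime over C: the roots of 'Phi_d
   are the primitive d-th roots of unity. *)
Lemma coprimep_Cyclotomic d e : (0 < d)%N -> (0 < e)%N -> d != e ->
  coprimep (toC 'Phi_d) (toC 'Phi_e).
Proof.
move=> d_gt0 e_gt0 neq_de.
have [z prim_z] := C_prim_root_exists d_gt0.
have [w prim_w] := C_prim_root_exists e_gt0.
rewrite (Cintr_Cyclotomic prim_z) (Cintr_Cyclotomic prim_w) /cyclotomic.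
apply: (big_ind (fun p => coprimep p (cyclotomic w e))) => [||k cop_kd].
- exact: coprime1p.
- by move=> p q cop_p cop_q; rewrite coprimepMl cop_p cop_q.
rewrite coprimep_sym coprimep_XsubC (root_cyclotomic prim_w).
have prim_zk : d.-primitive_root (z ^+ k) by rewrite prim_root_exp_coprime.
by apply: contra neq_de => /(prim_root_order_uniq prim_zk) ->.
Qed.

Lemma prod_Cyclotomic_dvdp (s : seq nat) (m : {poly int}) : uniq s ->
  (forall d, d \in s -> 0 < d)%N -> (forall d, d \in s -> dvdZq 'Phi_d m) ->
  toC (\prod_(d <- s) 'Phi_d) %| toC m.
Proof.
elim: s => [|d s IH] /=; first by rewrite big_nil rmorph1 dvd1p.
case/andP=> d_notin_s uniq_s s_gt0 s_dvd.
have d_gt0 : (0 < d)%N by rewrite s_gt0 ?mem_head.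
have d_dvd : dvdZq 'Phi_d m by apply: s_dvd; rewrite mem_head.
have {}s_gt0 e : e \in s -> (0 < e)%N by move=> e_s; rewrite s_gt0 ?inE ?e_s ?orbT.
have {}s_dvd e : e \in s -> dvdZq 'Phi_e m.
  by move=> e_s; apply: s_dvd; rewrite inE e_s orbT.
rewrite big_cons rmorphM Gauss_dvdp; last first.
  rewrite rmorph_prod big_seq.
  apply: (big_ind (coprimep (toC 'Phi_d))) => [||e e_s]; first exact: coprimep1.
    by move=> p q cop_p cop_q; rewrite coprimepMr cop_p cop_q.
  apply: coprimep_Cyclotomic; rewrite ?d_gt0 ?s_gt0 //.
  by apply: contraNneq d_notin_s => ->.
rewrite IH // andbT; have [r ->] := d_dvd.
by rewrite rmorphM dvdp_mull.
Qed.

(* Divisibility by a monic integer polynomial P can be tested over C: the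
   remainder of m modulo P is an integer polynomial, smaller than P, whose
   image in C[q] is divisible by the image of P, hence it vanishes. *)
Lemma dvdZq_monic_map (P m : {poly int}) : P \is monic ->
  toC P %| toC m -> dvdZq P m.
Proof.
move=> P_monic dvd_Pm.
have mE := Pdiv.IdomainMonic.divp_eq P_monic m.
have size_toC (p : {poly int}) : size (toC p) = size p.
  by apply: size_map_inj_poly; [exact: intr_inj | rewrite rmorph0].
have dvd_rem : toC P %| toC (m %% P).
  by move: dvd_Pm; rewrite {1}mE rmorphD rmorphM /= dvdp_addr // dvdp_mull.
have rem0 : m %% P = 0.
  apply/eqP; apply: contraT => rem_neq0.
  have toC_rem_neq0 : toC (m %% P) != 0 by rewrite -size_poly_eq0 size_toC size_poly_eq0.
  have := dvdp_leq toC_rem_neq0 dvd_rem; rewrite !size_toC leqNgt.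
  by rewrite Pdiv.Idomain.ltn_modpN0 // monic_neq0.
by exists (m %/ P); rewrite {1}mE rem0 addr0.
Qed.

Lemma cycprod_bool_dvd N (b : nat -> bool) (m : {poly int}) :
  (forall d, (2 <= d < N)%N -> b d -> dvdZq 'Phi_d m) ->
  dvdZq (cycprod N (fun d => b d)) m.
Proof.
move=> factors_dvd; rewrite cycprod_bool -big_filter.
apply: dvdZq_monic_map; first by apply: monic_prod => d _; apply: Cyclotomic_monic.
apply: prod_Cyclotomic_dvdp; rewrite ?filter_uniq ?iota_uniq // => d;
  rewrite mem_filter mem_index_iota => /andP[b_d d_range].
- by case/andP: d_range => /ltnW.
- exact: factors_dvd d_range b_d.
Qed.

Lemma qint_lcm n :
  is_lcmZq [seq qint k | k <- iota 1 n.+1] (cycprod n.+2 (fun _ => true)).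
Proof.
split=> [p /mapP[k k_range ->] | m qint_dvd].
  rewrite mem_iota add1n in k_range.
  by rewrite (qint_cycprod (N := n.+2)) //; apply: cycprod_dvd => d _; apply: leq_b1.
apply: cycprod_bool_dvd => d /andP[d_ge2 lt_dN] _.
apply: dvdZq_trans (qint_dvd (qint d) _); last first.
  by apply/mapP; exists d; rewrite // mem_iota add1n lt_dN ltnW.
rewrite (qint_cycprod (N := n.+2)) ?lt_dN ?andbT 1?ltnW //.
by apply: Cyclotomic_dvd_cycprod; rewrite ?d_ge2 ?dvdnn.
Qed.

(* The lcm of the [n k]_q is the product of the 'Phi_d, 2 <= d <= n+1, with
   d not dividing n+1: each [n k]_q divides it by carry_dvd, and each of its
   factors 'Phi_d divides [n (d-1)]_q by carry_ndvd. *)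
Lemma qbinom_lcm n : is_lcmZq [seq qbinom n k | k <- iota 0 n.+1]
                              (cycprod n.+2 (fun d => ~~ (d %| n.+1)%N)).
Proof.
split=> [p /mapP[k le_kn ->] | m qbinom_dvd].
  rewrite mem_iota add0n ltnS in le_kn.
  rewrite qbinom_cycprod //; apply: cycprod_dvd => d /andP[d_ge2 _].
  have [dvd_dn|_] := boolP (d %| n.+1)%N; last exact: leq_b1.
  by rewrite leqn0 eqb0 carry_dvd // ltnW.
apply: cycprod_bool_dvd => d /andP[d_ge2 lt_dN] ndvd_dn.
have d_gt0 : (0 < d)%N by apply: ltnW.
have le_dn : (d.-1 <= n)%N by rewrite -ltnS prednK.
apply: dvdZq_trans (qbinom_dvd (qbinom n d.-1) _); last first.
  by apply/mapP; exists d.-1; rewrite // mem_iota add0n ltnS.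
rewrite qbinom_cycprod //; apply: Cyclotomic_dvd_cycprod; first by rewrite d_ge2.
by rewrite carry_ndvd ?d_gt0.
Qed.

(* The two lcms differ by the factor [n+1]_q, the product of the 'Phi_d with
   d | n+1. *)
Lemma qint_lcm_factor n : cycprod n.+2 (fun _ => true) =
  cycprod n.+2 (fun d => ~~ (d %| n.+1)%N) * qint n.+1.
Proof.
rewrite (qint_cycprod (N := n.+2)) ?ltnSn // cycprodD.
by apply: eq_cycprod => d _; case: (d %| n.+1)%N.
Qed.

Lemma is_lcmZq_unique s P L : is_lcmZq s P -> P != 0 -> is_lcmZq s L ->
  exists2 u, u \is a GRing.unit & L = u * P.
Proof.
move=> [P_mul P_min] P_neq0 [L_mul L_min].
have [u PE] := L_min P P_mul; have [v LE] := P_min L L_mul.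
have uv1 : u * v = 1 by apply: (mulIf P_neq0); rewrite mul1r -mulrA -LE -PE.
by exists v => //; apply/unitrP; exists u; rewrite [v * u]mulrC.
Qed.

Lemma is_lcmZq_unit s Q u : u \is a GRing.unit -> is_lcmZq s Q -> is_lcmZq s (u * Q).
Proof.
move=> u_unit [Q_mul Q_min]; split=> [p /Q_mul | m /Q_min [r ->]].
  exact: dvdZq_mull.
by exists (r * u^-1); rewrite mulrA mulrVK.
Qed.

Theorem theorem2 (n : nat) (hn : (0 < n)%N) :
  (exists L, is_lcmZq [seq qint k | k <- iota 1 n.+1] L) /\
  (forall L, is_lcmZq [seq qint k | k <- iota 1 n.+1] L ->
     exists Q, L = Q * qint n.+1 /\
               is_lcmZq [seq qbinom n k | k <- iota 0 n.+1] Q).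
Proof.
split; first by exists (cycprod n.+2 (fun _ => true)); apply: qint_lcm.
move=> L /(is_lcmZq_unique (qint_lcm n) (cycprod_neq0 _ _)) [u u_unit ->].
exists (u * cycprod n.+2 (fun d => ~~ (d %| n.+1)%N)); split.
  by rewrite qint_lcm_factor mulrA.
exact: is_lcmZq_unit (qbinom_lcm n).
Qed.
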